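(* Let $\Phi$ be a finite crystallographic root system and let $\beta,\gamma\in\Phi^+$ be distinct positive roots. Then \[ \operatorname{Cov}(\mathcal{X}_\beta,\mathcal{X}_\gamma)=\pm\Big(\frac14-\frac{1}{2\cdot\operatorname{ord}(\beta,\gamma)}\Big), \] with the sign positive if $\langle\beta,\gamma\rangle\ge0$ and negative if $\langle\beta,\gamma\rangle\le 0$. In particular, $\mathcal{X}_\beta$ and $\mathcal{X}_\gamma$ are independent if and only if $\beta$ and $\gamma$ are orthogonal.
   Context: $\Phi\subset V$ is a finite crystallographic root system in a Euclidean space with inner product $\langle\cdot,\cdot\rangle$, with positive roots $\Phi^+$ and Weyl group $W$; $s_\beta$ is the reflection in $\beta$. $\operatorname{ord}(\beta,\gamma)=\min\{k>0 : (s_\beta s_\gamma)^k=e\}$. For $\beta\in\Phi^+$, $\mathcal{X}_\beta$ is the Bernoulli random variable on $W$ with the uniform distribution, $\mathcal{X}_\beta(w)=1$ if $w(\beta)\in-\Phi^+$ and $0$ if $w(\beta)\in\Phi^+$. *)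

From HB Require Import structures.
From mathcomp Require Import all_boot all_order all_algebra.
From mathcomp Require Import reals.
Set Implicit Arguments. Unset Strict Implicit. Unset Printing Implicit Defensive.
Import Order.TTheory GRing.Theory Num.Theory.
Local Open Scope ring_scope.

Section RootSystems.
Variables (R : realType) (n : nat).
Local Notation V := 'rV[R]_n.

Definition dot (u v : V) : R := \sum_(i < n) u 0 i * v 0 i.

(* matrix of the reflection s_a (acting on row vectors on the right):
   v *m refl a = v - (2 <v,a> / <a,a>) a *)
Definition refl (a : V) : 'M[R]_n :=
  1%:M - (2 / dot a a) *: (a^T *m a).

(* Finite crystallographic (reduced) root system Phi in V (Humphreys' def.):
   Phi is finite (a seq), spans V, does not contain 0, the only multiples of
   a root a in Phi are +-a, Phi is stable under each s_a, and the Cartan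
   numbers 2<b,a>/<a,a> are integers. *)
Definition root_system (Phi : seq V) : Prop :=
  [/\ (forall v : V, exists c : 'I_(size Phi) -> R,
          v = \sum_(i < size Phi) c i *: Phi`_i),
      0 \notin Phi,
      (forall a c, a \in Phi -> c *: a \in Phi -> c = 1 \/ c = -1),
      (forall a b, a \in Phi -> b \in Phi -> b *m refl a \in Phi) &
      (forall a b, a \in Phi -> b \in Phi ->
          exists z : int, 2 * dot b a / dot a a = z%:~R)].

(* A positive system is determined by a regular vector x (<a,x> <> 0 for all
   roots): Phi^+ = {a in Phi | <a,x> > 0}. *)
Definition regular (Phi : seq V) (x : V) : Prop :=
  forall a, a \in Phi -> dot a x != 0.

Definition pos_roots (Phi : seq V) (x : V) : seq V :=
  [seq a <- Phi | 0 < dot a x].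

(* Weyl group: the group generated by the reflections s_a, a in Phi
   (each s_a is an involution, so the group is the set of finite products). *)
Definition weyl (Phi : seq V) (M : 'M[R]_n) : Prop :=
  exists rs : seq V, all (mem Phi) rs /\ M = \prod_(a <- rs) refl a.

Definition is_ord (b g : V) (k : nat) : Prop :=
  [/\ (0 < k)%N, (refl b * refl g) ^+ k = 1 &
      forall j, (0 < j < k)%N -> (refl b * refl g) ^+ j != 1].

Definition Xvar (Phi : seq V) (x : V) (b : V) (w : 'M[R]_n) : R :=
  if - (b *m w) \in pos_roots Phi x then 1 else 0.

(* Uniform distribution on W, given by a duplicate-free enumeration ws of W. *)
Definition expect (ws : seq 'M[R]_n) (f : 'M[R]_n -> R) : R :=
  (\sum_(w <- ws) f w) / (size ws)%:R.

Definition covar (ws : seq 'M[R]_n) (X Y : 'M[R]_n -> R) : R :=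
  expect ws (fun w => X w * Y w) - expect ws X * expect ws Y.

Definition prob (ws : seq 'M[R]_n) (P : pred 'M[R]_n) : R :=
  (count P ws)%:R / (size ws)%:R.

Definition indep01 (ws : seq 'M[R]_n) (X Y : 'M[R]_n -> R) : Prop :=
  forall u v : R, u \in [:: 0; 1] -> v \in [:: 0; 1] ->
    prob ws (fun w => (X w == u) && (Y w == v)) =
    prob ws (fun w => X w == u) * prob ws (fun w => Y w == v).

End RootSystems.

From HB Require Import structures.
From mathcomp Require Import all_boot all_order all_algebra.
From mathcomp Require Import reals.
From mathcomp Require Import ring lra zify.
Set Implicit Arguments. Unset Strict Implicit. Unset Printing Implicit Defensive.
Import Order.TTheory GRing.Theory Num.Theory.
Local Open Scope ring_scope.

(* Left multiplication by s_b and s_g permutes W, so E[X_b X_g] can be computed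
   by averaging, for each w in W, over the 2m words (s_b s_g)^j and
   (s_b s_g)^j s_g (j < m) of the dihedral group <s_b, s_g>, where m is the
   order of s_b s_g.  Such a word sends b and g to integral combinations of b
   and g that only depend on the Cartan integers <g, b^v> and <b, g^v>; by the
   strict Cauchy-Schwarz inequality only eleven pairs occur (A1 x A1, A2, B2,
   G2, with either sign of <b, g>).  For each of them, whatever the signs of
   <w b, x> and <w g, x>, exactly m - 1 of the 2m words send both b and g to
   negative roots if <b, g> >= 0, and exactly one does if <b, g> < 0: this is
   a finite sign analysis of the linear forms involved.  Hence E[X_b X_g] is
   (m - 1)/(2m) or 1/(2m), while E[X_b] = E[X_g] = 1/2 because w |-> s_b w
   exchanges X_b = 0 and X_b = 1.  For {0,1}-valued variables independence is
   equivalent to zero covariance, i.e. to m = 2, i.e. to <b, g> = 0. *)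

Section Reflections.
Variables (R : realType) (n : nat).
Local Notation V := 'rV[R]_n.
Implicit Types (u v a : V).

Lemma dotC u v : dot u v = dot v u.
Proof. by apply: eq_bigr => i _; rewrite mulrC. Qed.

Lemma dotDl u v a : dot (u + v) a = dot u a + dot v a.
Proof. by rewrite /dot -big_split; apply: eq_bigr => i _; rewrite mxE mulrDl. Qed.

Lemma dotZl (c : R) u a : dot (c *: u) a = c * dot u a.
Proof. by rewrite /dot mulr_sumr; apply: eq_bigr => i _; rewrite mxE mulrA. Qed.

Lemma dotNl u a : dot (- u) a = - dot u a.
Proof. by rewrite -scaleN1r dotZl mulN1r. Qed.

Lemma dotBl u v a : dot (u - v) a = dot u a - dot v a.
Proof. by rewrite dotDl dotNl. Qed.

Lemma dotZr (c : R) u a : dot a (c *: u) = c * dot a u.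
Proof. by rewrite dotC dotZl dotC. Qed.

Lemma dotBr u v a : dot a (u - v) = dot a u - dot a v.
Proof. by rewrite dotC dotBl !(dotC a). Qed.

Lemma dotvv_gt0 v : v != 0 -> 0 < dot v v.
Proof.
move=> v_neq0; have sq_ge0 i : 0 <= v 0 i * v 0 i by rewrite -expr2 sqr_ge0.
rewrite /dot lt_def sumr_ge0 ?andbT //; apply: contra v_neq0.
rewrite psumr_eq0 // => /allP v0; apply/eqP/rowP => i; rewrite mxE.
by have /implyP/(_ isT) := v0 i (mem_index_enum i); rewrite mulf_eq0 orbb => /eqP.
Qed.

Definition cartan u a : R := 2 * dot u a / dot a a.

Lemma cartan_self a : a != 0 -> cartan a a = 2.
Proof. by move=> /dotvv_gt0 /lt0r_neq0 aa_neq0; rewrite /cartan mulfK. Qed.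

Lemma cartanDl u v a : cartan (u + v) a = cartan u a + cartan v a.
Proof. by rewrite /cartan dotDl mulrDr mulrDl. Qed.

Lemma cartanZl (c : R) u a : cartan (c *: u) a = c * cartan u a.
Proof. by rewrite /cartan dotZl mulrCA !mulrA. Qed.

Lemma cartanNl u a : cartan (- u) a = - cartan u a.
Proof. by rewrite -scaleN1r cartanZl mulN1r. Qed.

Lemma cartan_eq0 u a : a != 0 -> (cartan u a == 0) = (dot u a == 0).
Proof.
move=> /dotvv_gt0 aa_gt0.
by rewrite /cartan mulf_eq0 invr_eq0 (gt_eqF aa_gt0) orbF mulf_eq0 pnatr_eq0.
Qed.

Lemma cartan_ge0 u a : a != 0 -> (0 <= cartan u a) = (0 <= dot u a).
Proof. by move=> /dotvv_gt0 aa_gt0; rewrite /cartan pmulr_lge0 ?invr_gt0 // pmulr_rge0. Qed.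

Lemma mulmx_refl v a : v *m refl a = v - cartan v a *: a.
Proof.
have dot_mx u : u *m a^T = (dot u a)%:M.
  by apply/matrixP => i j; rewrite !ord1 !mxE; apply: eq_bigr => k _; rewrite !mxE.
rewrite /refl mulmxBr mulmx1 -scalemxAr mulmxA dot_mx mul_scalar_mx scalerA.
by rewrite /cartan mulrAC.
Qed.

Lemma mulmx_refl_self a : a != 0 -> a *m refl a = - a.
Proof.
move=> a_neq0; rewrite mulmx_refl cartan_self //.
by rewrite scaler_nat mulr2n opprD addrA subrr add0r.
Qed.

Lemma mulmx_reflK a v : a != 0 -> v *m refl a *m refl a = v.
Proof.
move=> a_neq0; rewrite !mulmx_refl cartanDl cartanNl cartanZl cartan_self //.
by apply/rowP => i; rewrite !mxE; ring.
Qed.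

Lemma refl_invol a : a != 0 -> refl a * refl a = 1.
Proof.
move=> a_neq0; apply/row_matrixP => i.
by rewrite !rowE -mulmxE mulmxA mulmx1 mulmx_reflK.
Qed.

Definition word_mx (b g : V) (s : seq bool) : 'M[R]_n :=
  \prod_(c <- s) refl (if c then b else g).

End Reflections.

Section WordCoords.
Variable T : pzRingType.
Implicit Types (A B P Q : T) (s : seq bool).

(* The action of s_b (c = true) or s_g (c = false) on the coordinates p of
   v + p.1 b + p.2 g, where A = cartan g b, B = cartan b g, P = cartan v b
   and Q = cartan v g. *)
Definition refl_coords A B P Q (c : bool) (p : T * T) : T * T :=
  if c then (- p.1 - p.2 * A - P, p.2) else (p.1, - p.2 - p.1 * B - Q).

Definition word_coords A B P Q s : T * T :=
  foldl (fun p c => refl_coords A B P Q c p) (0, 0) s.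

End WordCoords.

Lemma word_coords_rmorph (S T : pzRingType) (f : {rmorphism S -> T}) A B P Q s :
  word_coords (f A) (f B) (f P) (f Q) s =
  (f (word_coords A B P Q s).1, f (word_coords A B P Q s).2).
Proof.
pose fold (A B P Q : _) := foldl (fun q c => refl_coords A B P Q c q).
have fold_rmorph p : fold _ (f A) (f B) (f P) (f Q) (f p.1, f p.2) s =
    (f (fold _ A B P Q p s).1, f (fold _ A B P Q p s).2).
  elim: s p => [|c s IHs] p //=; rewrite -IHs; congr foldl.
  by case: c; rewrite /refl_coords /= !rmorphB ?rmorphN rmorphM.
by have := fold_rmorph (0, 0); rewrite /= rmorph0.
Qed.

Lemma word_coordsE (T : comPzRingType) (A B P Q : T) s :
  word_coords A B P Q s =
  (P * (word_coords A B 1 0 s).1 + Q * (word_coords A B 0 1 s).1,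
   P * (word_coords A B 1 0 s).2 + Q * (word_coords A B 0 1 s).2).
Proof.
pose fold P Q := foldl (fun q c => refl_coords A B P Q c q).
have fold_lin p1 p2 : fold P Q (P * p1.1 + Q * p2.1, P * p1.2 + Q * p2.2) s =
    (P * (fold 1 0 p1 s).1 + Q * (fold 0 1 p2 s).1,
     P * (fold 1 0 p1 s).2 + Q * (fold 0 1 p2 s).2).
  elim: s p1 p2 => [|c s IHs] p1 p2 //=; rewrite -IHs; congr foldl.
  by case: c; rewrite /refl_coords /=; congr pair; ring.
by have := fold_lin (0, 0) (0, 0); rewrite /= !mulr0 addr0 => <-.
Qed.

Definition rotation_word (j : nat) : seq bool := flatten (nseq j [:: true; false]).

Section WordAction.
Variables (R : realType) (n : nat) (b g : 'rV[R]_n).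
Hypotheses (b_neq0 : b != 0) (g_neq0 : g != 0).

Lemma mulmx_word_mx v s :
  let p := word_coords (cartan g b) (cartan b g) (cartan v b) (cartan v g) s in
  v *m word_mx b g s = v + p.1 *: b + p.2 *: g.
Proof.
pose step c p := refl_coords (cartan g b) (cartan b g) (cartan v b) (cartan v g) c p.
suff fold_step p : (v + p.1 *: b + p.2 *: g) *m word_mx b g s =
    let q := foldl (fun q c => step c q) p s in v + q.1 *: b + q.2 *: g.
  by have := fold_step (0, 0); rewrite /= !scale0r !addr0.
elim: s p => [|c s IHs] p; first by rewrite /word_mx big_nil mulmx1.
rewrite /word_mx big_cons -mulmxE mulmxA -/(word_mx b g s) [RHS]/= -[RHS]IHs.
congr (_ *m _); rewrite mulmx_refl !cartanDl !cartanZl /step /refl_coords.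
by case: c; rewrite cartan_self //; apply/rowP => i; rewrite !mxE /=; ring.
Qed.

Lemma word_mx_rotation j : word_mx b g (rotation_word j) = (refl b * refl g) ^+ j.
Proof.
elim: j => [|j IHj]; first by rewrite /word_mx big_nil expr0.
by rewrite exprS -IHj /word_mx /= !big_cons mulrA.
Qed.

End WordAction.

Definition cartan_pairs : seq (int * int) :=
  [:: (0, 0); (1, 1); (-1, -1); (1, 2); (2, 1); (-1, -2); (-2, -1);
      (1, 3); (3, 1); (-1, -3); (-3, -1)].

Lemma cartan_pairs_mem (za zb : int) :
  za * zb < 4 -> 0 <= za * zb -> (za == 0) = (zb == 0) -> (za, zb) \in cartan_pairs.
Proof.
move=> lt4 ge0 eq0; have : (`|za| <= 3)%N && (`|zb| <= 3)%N by nia.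
by case: za zb lt4 ge0 eq0 => [[|[|[|[|?]]]]|[|[|[|?]]]] [[|[|[|[|?]]]]|[|[|[|?]]]].
Qed.

(* The order of s_b s_g when (cartan g b, cartan b g) = (za, zb), for the
   types A1 x A1, A2, B2 and G2. *)
Definition dihedral_order (za zb : int) : nat :=
  match absz (za * zb) with 0 => 2 | 1 => 3 | 2 => 4 | _ => 6 end.

Lemma dihedral_order_gt1 za zb : (1 < dihedral_order za zb)%N.
Proof. by rewrite /dihedral_order; case: absz => [|[|[|]]]. Qed.

Lemma dihedral_order_eq2 za zb : (za, zb) \in cartan_pairs ->
  (dihedral_order za zb == 2%N) = (za == 0).
Proof. by rewrite !inE; repeat case/orP; move=> /eqP[-> ->]. Qed.

(* These words need not be pairwise distinct: the double counting below
   counts them with multiplicity. *)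
Definition dihedral_words (m : nat) : seq (seq bool) :=
  [seq rotation_word j | j <- iota 0 m] ++
  [seq rotation_word j ++ [:: false] | j <- iota 0 m].

(* The coordinates of b *m word_mx b g s and g *m word_mx b g s in the basis
   (b, g); the constants 2 are cartan b b and cartan g g. *)
Definition word_b_coords (za zb : int) (s : seq bool) : int * int :=
  let p := word_coords za zb 2 zb s in (1 + p.1, p.2).

Definition word_g_coords (za zb : int) (s : seq bool) : int * int :=
  let p := word_coords za zb za 2 s in (p.1, 1 + p.2).

Lemma rotation_coords_order za zb : (za, zb) \in cartan_pairs ->
  let m := dihedral_order za zb in
  [/\ word_coords za zb 1 0 (rotation_word m) = (0, 0),
      word_coords za zb 0 1 (rotation_word m) = (0, 0) &
      forall j, (0 < j < m)%N -> word_coords za zb 2 zb (rotation_word j) != (0, 0)].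
Proof.
have : all (fun p : int * int => let m := dihedral_order p.1 p.2 in
    [&& word_coords p.1 p.2 1 0 (rotation_word m) == (0, 0),
        word_coords p.1 p.2 0 1 (rotation_word m) == (0, 0) &
        all (fun j => word_coords p.1 p.2 2 p.2 (rotation_word j) != (0, 0))
            (iota 1 m.-1)])
  cartan_pairs by vm_compute.
move=> /allP pairsP /pairsP /= /and3P[/eqP-> /eqP-> /allP nz].
by split=> // j /andP[j_gt0 j_lt]; apply: nz; rewrite mem_iota; lia.
Qed.

Ltac eval_closed t := let t' := eval vm_compute in t in change t with t'.

Ltac split_signs :=
  repeat match goal with
  | H : is_true (_ && _) |- _ => case/andP: H => ? ?
  | H : is_true (?F != 0) |- _ => move: H; case: (ltgtP F 0) => [?|?|//] _
  end.

Section SignCount.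
Variable R : realFieldType.
Implicit Types (u v : R) (c : int * int).

Definition int_form c u v : R := c.1%:~R * u + c.2%:~R * v.

(* A representative of c up to sign, so that the sign analysis below splits
   only once on each line int_form c = 0. *)
Definition sign_normal c : bool * (int * int) :=
  if (0 < c.1) || (c.1 == 0) && (0 < c.2) then (true, c) else (false, (- c.1, - c.2)).

Definition neg_at (sc : bool * (int * int)) u v : bool :=
  if sc.1 then int_form sc.2 u v < 0 else 0 < int_form sc.2 u v.

Lemma int_formN c u v : int_form (- c.1, - c.2) u v = - int_form c u v.
Proof. by rewrite /int_form /= !rmorphN /=; ring. Qed.

Lemma neg_at_sign_normal c u v : neg_at (sign_normal c) u v = (int_form c u v < 0).
Proof. by rewrite /neg_at /sign_normal; case: (_ || _) => //=; rewrite int_formN oppr_gt0. Qed.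

Lemma int_form_sign_normal_eq0 c u v :
  (int_form (sign_normal c).2 u v == 0) = (int_form c u v == 0).
Proof. by rewrite /sign_normal; case: (_ || _) => //=; rewrite int_formN oppr_eq0. Qed.

Lemma count_neg_sign_normal (f h : seq bool -> int * int) (L : seq (seq bool)) u v :
  (forall s, int_form (f s) u v != 0) -> (forall s, int_form (h s) u v != 0) ->
  all (fun c => int_form c u v != 0)
    (undup ([seq (sign_normal (f s)).2 | s <- L] ++ [seq (sign_normal (h s)).2 | s <- L])) /\
  (\sum_(s <- L) ((int_form (f s) u v < 0)%R && (int_form (h s) u v < 0)%R))%N =
  (\sum_(q <- [seq (sign_normal (f s), sign_normal (h s)) | s <- L])
     (neg_at q.1 u v && neg_at q.2 u v))%N.
Proof.
move=> f_neq0 h_neq0; split.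
  apply/allP => c; rewrite mem_undup mem_cat.
  by case/orP => /mapP[s _ ->]; rewrite int_form_sign_normal_eq0.
by rewrite big_map; apply: eq_bigr => s _; rewrite !neg_at_sign_normal.
Qed.

Lemma dihedral_count za zb u v : (za, zb) \in cartan_pairs ->
  (forall s, int_form (word_b_coords za zb s) u v != 0) ->
  (forall s, int_form (word_g_coords za zb s) u v != 0) ->
  (\sum_(s <- dihedral_words (dihedral_order za zb))
     ((int_form (word_b_coords za zb s) u v < 0)%R &&
      (int_form (word_g_coords za zb s) u v < 0)%R))%N =
  if 0 <= za then (dihedral_order za zb).-1 else 1%N.
Proof.
move=> pairP b_neq0 g_neq0; have [+ ->] := count_neg_sign_normal
  (dihedral_words (dihedral_order za zb)) b_neq0 g_neq0.
move: pairP; rewrite !inE; repeat case/orP; move=> /eqP[-> ->].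
all: match goal with |- context [undup ?l] => eval_closed (undup l) end.
all: match goal with |- context [map ?f ?L] => eval_closed (map f L) end.
all: rewrite !big_cons big_nil; cbn [all fst snd neg_at]; rewrite /int_form; cbn [fst snd].
all: move=> forms_neq0; split_signs; first [by [] | exfalso; lra].
Qed.

End SignCount.

Section WeylGroup.
Variables (R : realType) (n : nat) (Phi : seq 'rV[R]_n).
Local Notation M := 'M[R]_n.
Hypothesis Phi_root : root_system Phi.

Lemma root_neq0 a : a \in Phi -> a != 0.
Proof. by case: Phi_root => _ Phi_neq0 _ _ _ aP; apply: contraNneq Phi_neq0 => <-. Qed.

Lemma root_mulmx_refl a c : a \in Phi -> c \in Phi -> c *m refl a \in Phi.
Proof. by case: Phi_root => _ _ _ Phi_refl _; apply: Phi_refl. Qed.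

Lemma root_opp a : a \in Phi -> - a \in Phi.
Proof. by move=> aP; rewrite -mulmx_refl_self ?root_neq0 ?root_mulmx_refl. Qed.

Lemma weyl1 : weyl Phi 1.
Proof. by exists [::]; rewrite big_nil. Qed.

Lemma weyl_refl a : a \in Phi -> weyl Phi (refl a).
Proof. by move=> aP; exists [:: a]; rewrite big_seq1 /= aP. Qed.

Lemma weylM w1 w2 : weyl Phi w1 -> weyl Phi w2 -> weyl Phi (w1 *m w2).
Proof.
move=> [r1 [r1P ->]] [r2 [r2P ->]]; exists (r1 ++ r2).
by rewrite all_cat r1P r2P big_cat mulmxE.
Qed.

Lemma weyl_word_mx b g s : b \in Phi -> g \in Phi -> weyl Phi (word_mx b g s).
Proof.
move=> bP gP; exists [seq if c then b else g | c <- s].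
by rewrite big_map; split=> //; apply/allP => _ /mapP[[] _ ->].
Qed.

Lemma root_mulmx_weyl a w : a \in Phi -> weyl Phi w -> a *m w \in Phi.
Proof.
move=> + [rs [rsP ->]]; elim: rs a rsP => [|c rs IHrs] a /= => [_ aP|/andP[cP rsP] aP].
  by rewrite big_nil mulmx1.
by rewrite big_cons -mulmxE mulmxA IHrs // root_mulmx_refl.
Qed.

Variable ws : seq M.
Hypotheses (ws_uniq : uniq ws) (ws_weyl : forall w, w \in ws <-> weyl Phi w).

Lemma weyl_size_gt0 : (0 < size ws)%N.
Proof. by have /ws_weyl := weyl1; case: ws. Qed.

Lemma perm_weyl_mull w0 : weyl Phi w0 -> perm_eq [seq w0 *m w | w <- ws] ws.
Proof.
move=> [rs [+ ->]]; elim: rs => [_|c rs IHrs /andP[cP /IHrs perm_rs]].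
  by rewrite big_nil (@eq_map _ _ _ id) ?map_id // => w; exact: mul1r.
have reflK (w : M) : refl c *m (refl c *m w) = w.
  by rewrite mulmxA mulmxE refl_invol ?root_neq0 // mul1r.
have weyl_reflM w : weyl Phi w -> weyl Phi (refl c *m w) by apply/weylM/weyl_refl.
have perm_c : perm_eq [seq refl c *m w | w <- ws] ws.
  apply: uniq_perm => //; first by rewrite map_inj_uniq //; apply: can_inj reflK.
  move=> w; apply/mapP/idP => [[w' /ws_weyl/weyl_reflM/ws_weyl + ->] //|/ws_weyl wW].
  by exists (refl c *m w); rewrite ?reflK //; apply/ws_weyl/weyl_reflM.
rewrite big_cons (eq_map (fun w => esym (mulmxA _ _ w))) -mulmxE.
by rewrite (map_comp (mulmx (refl c))) (perm_trans (perm_map _ perm_rs)).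
Qed.

Lemma sum_weyl_mull (F : M -> nat) w0 : weyl Phi w0 ->
  (\sum_(w <- ws) F (w0 *m w) = \sum_(w <- ws) F w)%N.
Proof.
by move=> /perm_weyl_mull perm_w0; rewrite -(big_map (mulmx w0) xpredT) (perm_big _ perm_w0).
Qed.

Lemma double_count (F : M -> nat) (L : seq M) N :
  (forall w0, w0 \in L -> weyl Phi w0) ->
  (forall w, w \in ws -> \sum_(w0 <- L) F (w0 *m w) = N)%N ->
  (size L * \sum_(w <- ws) F w = size ws * N)%N.
Proof.
move=> LW sumL; transitivity (\sum_(w0 <- L) \sum_(w <- ws) F (w0 *m w))%N.
  rewrite [RHS](eq_big_seq (fun=> \sum_(w <- ws) F w)%N) => [|w0 w0L].
    by rewrite big_const_seq count_predT iter_addn_0 mulnC.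
  exact: sum_weyl_mull (LW _ w0L).
rewrite exchange_big (eq_big_seq (fun=> N)) => [|w /sumL//].
by rewrite big_const_seq count_predT iter_addn_0 mulnC.
Qed.

Variable x : 'rV[R]_n.
Hypothesis x_reg : regular Phi x.

Lemma XvarE a w : a \in Phi -> weyl Phi w ->
  Xvar Phi x a w = if dot (a *m w) x < 0 then 1 else 0.
Proof.
move=> aP wW; rewrite /Xvar /pos_roots mem_filter root_opp ?root_mulmx_weyl // andbT.
by rewrite dotNl oppr_gt0.
Qed.

Lemma expect_Xvar a : a \in Phi -> expect ws (Xvar Phi x a) = 1 / 2.
Proof.
move=> aP; pose F w := nat_of_bool (dot (a *m w) x < 0).
have F_refl w : w \in ws -> (F w + F (refl a *m w) = 1)%N.
  move=> /ws_weyl wW; rewrite /F mulmxA mulmx_refl_self ?root_neq0 //.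
  rewrite mulNmx dotNl oppr_lt0.
  by have := x_reg (root_mulmx_weyl aP wW); case: ltgtP.
have sumF : (2 * \sum_(w <- ws) F w = size ws)%N.
  rewrite mul2n -addnn -{2}(sum_weyl_mull F (weyl_refl aP)) -big_split -sum1_size.
  exact: eq_big_seq F_refl.
have sumF_neq0 : (\sum_(w <- ws) F w)%:R != 0 :> R.
  by rewrite pnatr_eq0 -lt0n -(ltn_pmul2l (isT : 0 < 2)%N) sumF weyl_size_gt0.
rewrite /expect (eq_big_seq (fun w => (F w)%:R)) => [|w /ws_weyl wW].
  by rewrite -natr_sum -sumF natrM; field.
by rewrite XvarE // /F; case: ifP.
Qed.

End WeylGroup.

Section RootPair.
Variables (R : realType) (n : nat) (Phi : seq 'rV[R]_n) (b g : 'rV[R]_n).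
Hypothesis Phi_root : root_system Phi.
Hypotheses (bP : b \in Phi) (gP : g \in Phi) (b_neq_g : b != g) (g_neq_Nb : g != - b).

Let b_neq0 := root_neq0 Phi_root bP.
Let g_neq0 := root_neq0 Phi_root gP.

Lemma root_pair_free (c d : R) : c *: b + d *: g = 0 -> c = 0 /\ d = 0.
Proof.
move=> cd0; have [d0|d_neq0] := eqVneq d 0.
  move: cd0; rewrite d0 scale0r addr0 => /eqP.
  by rewrite scaler_eq0 (negPf b_neq0) orbF => /eqP.
have gE : g = (- c / d) *: b.
  apply: (scalerI d_neq0); rewrite scalerA mulrCA mulfV // mulr1 scaleNr.
  by apply/eqP; rewrite -addr_eq0 addrC cd0.
case: Phi_root => _ _ Phi_mult _ _.
have /(Phi_mult _ _ bP) [] : (- c / d) *: b \in Phi by rewrite -gE.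
  by move=> e1; move: b_neq_g; rewrite gE e1 scale1r eqxx.
by move=> eN1; move: g_neq_Nb; rewrite gE eN1 scaleN1r eqxx.
Qed.

Lemma cartan_mul_lt4 : cartan g b * cartan b g < 4.
Proof.
have bb_gt0 := dotvv_gt0 b_neq0; have gg_gt0 := dotvv_gt0 g_neq0.
pose h := g - (dot g b / dot b b) *: b.
have h_neq0 : h != 0.
  apply/eqP => h0; suff [_ /eqP] : - (dot g b / dot b b) = 0 /\ 1 = 0 :> R.
    by rewrite oner_eq0.
  by apply: root_pair_free; rewrite scaleNr scale1r addrC; exact: h0.
have hh_gt0 := dotvv_gt0 h_neq0.
have -> : cartan g b * cartan b g = 4 - 4 * dot h h / dot g g.
  rewrite /h !(dotBl, dotBr, dotZl, dotZr) /cartan [dot g b]dotC.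
  by field; rewrite !lt0r_neq0.
by rewrite ltrBlDr ltrDl divr_gt0 // mulr_gt0.
Qed.

Lemma cartan_pair_int : exists za zb : int,
  [/\ (za, zb) \in cartan_pairs, cartan g b = za%:~R & cartan b g = zb%:~R].
Proof.
case: (Phi_root) => _ _ _ _ Phi_int.
have [za zaE] : exists za : int, cartan g b = za%:~R := Phi_int _ _ bP gP.
have [zb zbE] : exists zb : int, cartan b g = zb%:~R := Phi_int _ _ gP bP.
exists za, zb; split=> //; apply: cartan_pairs_mem.
- by rewrite -(ltr_int R) intrM -zaE -zbE cartan_mul_lt4.
- have bb_gt0 := dotvv_gt0 b_neq0; have gg_gt0 := dotvv_gt0 g_neq0.
  rewrite -(ler_int R) intrM -zaE -zbE.
  have -> : cartan g b * cartan b g = 4 * dot b g ^+ 2 / (dot b b * dot g g).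
    by rewrite /cartan [dot g b]dotC; field; rewrite !lt0r_neq0.
  by apply: divr_ge0; apply: mulr_ge0; rewrite ?sqr_ge0 ?ltW ?ler0n.
- by rewrite -(intr_eq0 R) -zaE -(intr_eq0 R zb) -zbE !cartan_eq0 // dotC.
Qed.

End RootPair.

Section DihedralAverage.
Variables (R : realType) (n : nat) (Phi : seq 'rV[R]_n) (ws : seq 'M[R]_n).
Variables (x b g : 'rV[R]_n) (za zb : int).
Hypotheses (Phi_root : root_system Phi) (x_reg : regular Phi x).
Hypotheses (ws_uniq : uniq ws) (ws_weyl : forall w, w \in ws <-> weyl Phi w).
Hypotheses (bP : b \in Phi) (gP : g \in Phi) (b_neq_g : b != g) (g_neq_Nb : g != - b).
Hypotheses (pairP : (za, zb) \in cartan_pairs).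
Hypotheses (zaE : cartan g b = za%:~R) (zbE : cartan b g = zb%:~R).

Let b_neq0 := root_neq0 Phi_root bP.
Let g_neq0 := root_neq0 Phi_root gP.

Lemma mulmx_word_b s : b *m word_mx b g s =
  (word_b_coords za zb s).1%:~R *: b + (word_b_coords za zb s).2%:~R *: g.
Proof.
rewrite mulmx_word_mx // cartan_self // zaE zbE.
rewrite [word_coords _ _ 2 _ _](word_coords_rmorph intr za zb 2 zb s) /=.
by rewrite intrD mulr1z scalerDl scale1r.
Qed.

Lemma mulmx_word_g s : g *m word_mx b g s =
  (word_g_coords za zb s).1%:~R *: b + (word_g_coords za zb s).2%:~R *: g.
Proof.
rewrite mulmx_word_mx // cartan_self // zaE zbE.
rewrite [word_coords _ _ _ 2 _](word_coords_rmorph intr za zb za 2 s) /=.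
by rewrite intrD mulr1z scalerDl scale1r addrCA addrA.
Qed.

Lemma dot_word_b s w : dot (b *m (word_mx b g s *m w)) x =
  int_form (word_b_coords za zb s) (dot (b *m w) x) (dot (g *m w) x).
Proof. by rewrite mulmxA mulmx_word_b mulmxDl -!scalemxAl dotDl !dotZl. Qed.

Lemma dot_word_g s w : dot (g *m (word_mx b g s *m w)) x =
  int_form (word_g_coords za zb s) (dot (b *m w) x) (dot (g *m w) x).
Proof. by rewrite mulmxA mulmx_word_g mulmxDl -!scalemxAl dotDl !dotZl. Qed.

Lemma is_ord_dihedral_order k : is_ord b g k -> k = dihedral_order za zb.
Proof.
move=> [k_gt0 kE k_min]; have [id_b id_g b_moved] := rotation_coords_order pairP.
set m := dihedral_order za zb in id_b id_g b_moved *.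
have rot_m : (refl b * refl g) ^+ m = 1.
  apply/row_matrixP => i; rewrite !rowE -word_mx_rotation mulmx1 mulmx_word_mx //.
  rewrite word_coordsE zaE zbE [word_coords _ _ 1 0 _](word_coords_rmorph intr za zb 1 0).
  rewrite [word_coords _ _ 0 1 _](word_coords_rmorph intr za zb 0 1) id_b id_g /=.
  by rewrite !mulr0 addr0 !scale0r !addr0.
have rot_neq1 j : (0 < j < m)%N -> (refl b * refl g) ^+ j != 1.
  move=> /b_moved; apply: contra => /eqP rot_j.
  have := mulmx_word_b (rotation_word j).
  rewrite word_mx_rotation rot_j mulmx1 /word_b_coords; case: word_coords => c d /=.
  rewrite intrD mulr1z scalerDl scale1r -addrA -{1}[b]addr0 => /addrI/esym.
  case/(root_pair_free Phi_root bP gP b_neq_g g_neq_Nb) => /eqP + /eqP.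
  by rewrite !intr_eq0 => /eqP-> /eqP->.
case: (ltngtP k m) => [k_lt|m_lt|//].
  by have := rot_neq1 k; rewrite k_gt0 k_lt kE eqxx => /(_ isT).
have := k_min m; rewrite m_lt rot_m eqxx ltnW ?dihedral_order_gt1 //.
by move=> /(_ isT).
Qed.

Lemma expect_Xvar_mul :
  expect ws (fun w => Xvar Phi x b w * Xvar Phi x g w) =
  (if 0 <= za then (dihedral_order za zb).-1 else 1%N)%:R / (2 * dihedral_order za zb)%:R.
Proof.
set m := dihedral_order za zb; set N := (if _ then _ else _)%N.
pose F w := nat_of_bool ((dot (b *m w) x < 0) && (dot (g *m w) x < 0)).
have orbit_count w : w \in ws ->
    (\sum_(w0 <- [seq word_mx b g s | s <- dihedral_words m]) F (w0 *m w))%N = N.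
  move=> /ws_weyl wW; rewrite big_map /F.
  under eq_bigr do rewrite dot_word_b dot_word_g.
  have word_reg (a : 'rV[R]_n) s : a \in Phi -> dot (a *m (word_mx b g s *m w)) x != 0.
    by move=> aP; apply/x_reg/(root_mulmx_weyl Phi_root aP)/weylM/wW/weyl_word_mx.
  by apply: dihedral_count => // s; rewrite -?dot_word_b -?dot_word_g word_reg.
have words_weyl w0 : w0 \in [seq word_mx b g s | s <- dihedral_words m] -> weyl Phi w0.
  by case/mapP => s _ ->; apply: weyl_word_mx.
have := double_count Phi_root ws_uniq ws_weyl words_weyl orbit_count.
rewrite size_map size_cat !size_map size_iota addnn -mul2n.
move=> /(congr1 (fun k => k%:R : R)); rewrite natrM [RHS]natrM => countE.
rewrite /expect (eq_big_seq (fun w => (F w)%:R)) => [|w /ws_weyl wW]; last first.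
  rewrite !XvarE // /F.
  by case: (dot (b *m w) x < 0); case: (dot (g *m w) x < 0); rewrite ?(mulr1, mulr0).
have size_neq0 : (size ws)%:R != 0 :> R by rewrite pnatr_eq0 -lt0n (weyl_size_gt0 ws_weyl).
have m2_neq0 : (2 * m)%:R != 0 :> R.
  by rewrite pnatr_eq0 muln_eq0 negb_or /= -lt0n ltnW ?dihedral_order_gt1.
by rewrite -natr_sum; apply/eqP; rewrite eqr_div // mulrC countE mulrC.
Qed.

Lemma covar_Xvar : covar ws (Xvar Phi x b) (Xvar Phi x g) =
  (if 0 <= za then 1 else -1) * (1 / 4 - 1 / (2 * (dihedral_order za zb)%:R)).
Proof.
rewrite /covar expect_Xvar_mul !(expect_Xvar Phi_root ws_uniq ws_weyl x_reg) //.
have m_gt1 := dihedral_order_gt1 za zb.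
have m_neq0 : (dihedral_order za zb)%:R != 0 :> R by rewrite pnatr_eq0 -lt0n ltnW.
case: ifP => _; rewrite natrM ?mul1r ?mulN1r; last by field.
by rewrite -subn1 natrB 1?ltnW //; field.
Qed.

End DihedralAverage.

Section UniformLaw.
Variables (R : realType) (n : nat) (ws : seq 'M[R]_n).
Hypothesis ws_gt0 : (0 < size ws)%N.
Implicit Types (f h X Y : 'M[R]_n -> R) (u v : R).

Lemma eq_expect f h : {in ws, f =1 h} -> expect ws f = expect ws h.
Proof. by move=> fh; rewrite /expect (eq_big_seq h). Qed.

Lemma expectD f h : expect ws (fun w => f w + h w) = expect ws f + expect ws h.
Proof. by rewrite /expect big_split mulrDl. Qed.

Lemma expectZ (c : R) f : expect ws (fun w => c * f w) = c * expect ws f.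
Proof. by rewrite /expect -mulr_sumr mulrA. Qed.

Lemma expect_cst (c : R) : expect ws (fun=> c) = c.
Proof.
have ws_neq0 : (size ws)%:R != 0 :> R by rewrite pnatr_eq0 -lt0n.
by rewrite /expect big_const_seq count_predT iter_addr_0 -[c *+ _]mulr_natr mulfK.
Qed.

Lemma prob_expect (P : pred 'M[R]_n) : prob ws P = expect ws (fun w => (P w)%:R).
Proof.
rewrite /prob /expect -sum1_count natr_sum big_mkcond /=; congr (_ / _).
by apply: eq_bigr => w _; case: (P w).
Qed.

Lemma eq01_affine (t u : R) : t \in [:: 0; 1] -> u \in [:: 0; 1] ->
  ((t == u) : nat)%:R = 1 - u + (2 * u - 1) * t.
Proof.
rewrite !inE => /orP[]/eqP-> /orP[]/eqP->.
all: by rewrite ?eqxx ?oner_eq0 ?(eq_sym 0) ?oner_eq0 /=; ring.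
Qed.

Lemma prob_pair_covar X Y u v :
  {in ws, forall w, X w \in [:: 0; 1]} -> {in ws, forall w, Y w \in [:: 0; 1]} ->
  u \in [:: 0; 1] -> v \in [:: 0; 1] ->
  prob ws (fun w => (X w == u) && (Y w == v)) -
    prob ws (fun w => X w == u) * prob ws (fun w => Y w == v) =
  (2 * u - 1) * (2 * v - 1) * covar ws X Y.
Proof.
move=> X01 Y01 u01 v01; rewrite /covar !prob_expect.
rewrite (@eq_expect _ (fun w => (1 - u) * (1 - v) + ((1 - u) * (2 * v - 1) * Y w +
    ((2 * u - 1) * (1 - v) * X w + (2 * u - 1) * (2 * v - 1) * (X w * Y w))))); last first.
  by move=> w wP; rewrite /= -mulnb natrM !eq01_affine ?X01 ?Y01 //; ring.
rewrite (@eq_expect (fun w => ((X w == u) : nat)%:R) (fun w => 1 - u + (2 * u - 1) * X w));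
  last by move=> w wP; rewrite /= eq01_affine ?X01.
rewrite (@eq_expect (fun w => ((Y w == v) : nat)%:R) (fun w => 1 - v + (2 * v - 1) * Y w));
  last by move=> w wP; rewrite /= eq01_affine ?Y01.
by rewrite !expectD !expect_cst !expectZ; ring.
Qed.

Lemma indep01_covar X Y :
  {in ws, forall w, X w \in [:: 0; 1]} -> {in ws, forall w, Y w \in [:: 0; 1]} ->
  indep01 ws X Y <-> covar ws X Y = 0.
Proof.
move=> X01 Y01; split=> [indep|cov0 u v u01 v01].
  have one01 : (1 : R) \in [:: 0; 1] by rewrite !inE eqxx orbT.
  by have := prob_pair_covar X01 Y01 one01 one01; rewrite indep // subrr => cov0; lra.
by apply/eqP; rewrite -subr_eq0 prob_pair_covar // cov0 mulr0.
Qed.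

End UniformLaw.

Lemma quarter_sub_eq0 (R : realFieldType) (m : nat) :
  (1 / 4 - 1 / (2 * m%:R) == 0 :> R) = (m == 2%N).
Proof. by rewrite subr_eq0 !div1r (inj_eq (@invr_inj R)) -natrM eqr_nat; lia. Qed.

Theorem theorem3p1 (R : realType) (n : nat) (Phi : seq 'rV[R]_n)
    (x : 'rV[R]_n) (ws : seq 'M[R]_n) (b g : 'rV[R]_n) (k : nat) :
  root_system Phi -> regular Phi x ->
  uniq ws -> (forall M : 'M[R]_n, M \in ws <-> weyl Phi M) ->
  b \in pos_roots Phi x -> g \in pos_roots Phi x -> b != g ->
  is_ord b g k ->
  [/\ (0 <= dot b g ->
         covar ws (Xvar Phi x b) (Xvar Phi x g) = 1 / 4 - 1 / (2 * k%:R)),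
      (dot b g <= 0 ->
         covar ws (Xvar Phi x b) (Xvar Phi x g) = - (1 / 4 - 1 / (2 * k%:R))) &
      (indep01 ws (Xvar Phi x b) (Xvar Phi x g) <-> dot b g = 0)].
Proof.
move=> Phi_root x_reg ws_uniq ws_weyl + + b_neq_g k_ord.
rewrite !mem_filter => /andP[bx bP] /andP[gx gP].
have g_neq_Nb : g != - b by apply: contraTneq gx => ->; rewrite dotNl oppr_gt0 -leNgt ltW.
have b_neq0 := root_neq0 Phi_root bP.
have [za [zb [pairP zaE zbE]]] := cartan_pair_int Phi_root bP gP b_neq_g g_neq_Nb.
have kE := is_ord_dihedral_order Phi_root bP gP b_neq_g g_neq_Nb pairP zaE zbE k_ord.
have := covar_Xvar Phi_root x_reg ws_uniq ws_weyl bP gP pairP zaE zbE.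
rewrite -kE -(ler0z R) -zaE cartan_ge0 // dotC => covE.
have k2E : (k == 2%N) = (dot b g == 0).
  by rewrite kE dihedral_order_eq2 // -(intr_eq0 R) -zaE cartan_eq0 // dotC.
have q0 : dot b g = 0 -> 1 / 4 - 1 / (2 * k%:R) = 0 :> R.
  by move=> d0; apply/eqP; rewrite quarter_sub_eq0 k2E d0.
have X01 a : {in ws, forall w, Xvar Phi x a w \in [:: 0; 1]}.
  by move=> w _; rewrite /Xvar; case: ifP; rewrite !inE eqxx ?orbT.
split=> [d_ge0|d_le0|]; first by rewrite covE d_ge0 mul1r.
  by rewrite covE; case: ltgtP d_le0 => // [d_lt0 _|/q0-> _]; rewrite ?mulN1r ?mulr0 ?oppr0.
apply: (iff_trans (indep01_covar (weyl_size_gt0 ws_weyl) (X01 b) (X01 g))).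
rewrite covE; split=> [/eqP|/q0->]; last by rewrite mulr0.
by rewrite mulf_eq0 quarter_sub_eq0 k2E; case: ifP => _; rewrite ?oppr_eq0 oner_eq0 => /eqP.
Qed.
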